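(* Let $k$ be a field and let $A$ and $B$ be $\mathbb Z$-graded, connected graded $k$-algebras with $A_1\neq 0$. Then $\mathrm{gr}\text{-}A\simeq\mathrm{gr}\text{-}B$ if and only if the associated $\mathbb Z$-algebras $\bar A$ and $\bar B$ are isomorphic as $\mathbb Z$-algebras (equivalently, if and only if there is an equivalence $\Phi:\mathrm{gr}\text{-}A\to\mathrm{gr}\text{-}B$ with $\Phi(A\langle n\rangle)\cong B\langle n\rangle$ for all $n\in\mathbb Z$).
   Context: A $\mathbb Z$-graded $k$-algebra $A$ is connected graded if $A=\bigoplus_{i\ge0}A_i$ and $A_0=k$. $\mathrm{gr}\text{-}A$ is the category of $\mathbb Z$-graded right $A$-modules with degree-preserving maps, and $M\langle n\rangle_i=M_{i-n}$. A $\mathbb Z$-algebra is a $k$-algebra $R=\bigoplus_{i,j\in\mathbb Z}R_{ij}$ (possibly without $1$) with $R_{ij}R_{jl}\subseteq R_{il}$, $R_{ij}R_{ml}=0$ for $j\neq m$, and each $R_{ii}$ containing an element $1_i$ that is a right identity on each $R_{ji}$ and a left identity on each $R_{ij}$; isomorphism of $\mathbb Z$-algebras is a $k$-algebra isomorphism with $1_i\mapsto 1_i$ for all $i$. For a $\mathbb Z$-graded ring $A$, $\bar A$ is the $\mathbb Z$-algebra with $\bar A_{ij}=A_{j-i}$ and multiplication induced from $A$. *)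

From HB Require Import structures.
From mathcomp Require Import all_boot all_order all_algebra.
Set Implicit Arguments. Unset Strict Implicit. Unset Printing Implicit Defensive.
Import GRing.Theory.
Local Open Scope ring_scope.

(* A Z-grading of a k-vector space V is encoded by its family of            *)
(* homogeneous-component projections q i : V -> V (internal direct sum).    *)

Section Defs.
Variable k : fieldType.

Definition lin (U V : lmodType k) (f : U -> V) : Prop :=
  forall (c : k) (u v : U), f (c *: u + v) = c *: f u + f v.

Definition is_grading (V : lmodType k) (q : int -> V -> V) : Prop :=
  [/\ forall i, lin (q i),
      forall i j v, q i (q j v) = (if i == j then q j v else 0) &
      forall v, exists s : seq int,
        [/\ uniq s, forall i, i \notin s -> q i v = 0 & v = \sum_(i <- s) q i v]].

Record gradedAlg := GradedAlg {
  galg : algType k;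
  gdeg : int -> galg -> galg;
  gdeg_grading : is_grading gdeg;
  gdeg_mul : forall i j (a b : galg), gdeg i a = a -> gdeg j b = b ->
                gdeg (i + j) (a * b) = a * b }.

Definition homog (A : gradedAlg) (i : int) (a : galg A) := @gdeg A i a = a.

Definition connected_graded (A : gradedAlg) : Prop :=
  (forall i : int, i < 0 -> forall a, @gdeg A i a = 0) /\
  (forall a, @homog A 0 a <-> exists c : k, a = c%:A).

Definition is_gmod (A : gradedAlg) (M : lmodType k)
    (act : M -> galg A -> M) (q : int -> M -> M) : Prop :=
  [/\ (forall a, lin (fun m => act m a)) /\ (forall m, lin (act m)),
      (forall m, act m 1 = m) /\ (forall m a b, act (act m a) b = act m (a * b)),
      is_grading q &
      forall i j m a, q i m = m -> @homog A j a -> q (i + j) (act m a) = act m a].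

Record gmod (A : gradedAlg) := GMod {
  gcar : lmodType k;
  gact : gcar -> galg A -> gcar;
  gq : int -> gcar -> gcar;
  gmodP : is_gmod gact gq }.

Record ghom (A : gradedAlg) (M N : gmod A) := GHom {
  ghf :> gcar M -> gcar N;
  ghP : [/\ lin ghf,
            forall m a, ghf (gact m a) = gact (ghf m) a &
            forall i m, ghf (@gq A M i m) = @gq A N i (ghf m)] }.

Definition giso (A : gradedAlg) (M N : gmod A) : Prop :=
  exists (f : ghom M N) (g : ghom N M),
    (forall x, g (f x) = x) /\ (forall y, f (g y) = y).

Record gfunctor (A B : gradedAlg) := GFunctor {
  fobj : gmod A -> gmod B;
  fmor : forall M N : gmod A, ghom M N -> ghom (fobj M) (fobj N) }.

Definition is_klin_functor (A B : gradedAlg) (F : gfunctor A B) : Prop :=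
  [/\ forall (M : gmod A) (h : ghom M M), (forall x, h x = x) ->
        forall y, fmor F h y = y,
      forall (M N P : gmod A) (f : ghom M N) (g : ghom N P) (h : ghom M P),
        (forall x, h x = g (f x)) ->
        forall y, fmor F h y = fmor F g (fmor F f y) &
      forall (M N : gmod A) (f g h : ghom M N) (c : k),
        (forall x, h x = c *: f x + g x) ->
        forall y, fmor F h y = c *: fmor F f y + fmor F g y].

Definition unit_iso (A B : gradedAlg) (F : gfunctor A B) (G : gfunctor B A) :=
  exists (eta : forall M : gmod A, ghom M (fobj G (fobj F M)))
         (eta' : forall M : gmod A, ghom (fobj G (fobj F M)) M),
    [/\ forall M x, eta' M (eta M x) = x,
        forall M y, eta M (eta' M y) = y &
        forall (M M' : gmod A) (f : ghom M M') x,
          eta M' (f x) = fmor G (fmor F f) (eta M x)].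

Definition is_equivalence (A B : gradedAlg) (F : gfunctor A B) : Prop :=
  is_klin_functor F /\
  exists G : gfunctor B A, [/\ is_klin_functor G, unit_iso F G & unit_iso G F].

Definition gr_equiv (A B : gradedAlg) : Prop :=
  exists F : gfunctor A B, is_equivalence F.

Section Shift.
Variables (A : gradedAlg) (n : int).

Lemma shift_is_gmod :
  @is_gmod A (galg A) (fun m a => m * a) (fun i => @gdeg A (i - n)).
Proof.
have [lq qq fs] := gdeg_grading A.
split.
- split=> [a c u v|m c u v]; first by rewrite mulrDl scalerAl.
  by rewrite mulrDr scalerAr.
- by split=> [m|m a b]; rewrite ?mulr1 ?mulrA.
- split=> [i|i j v|v]; first exact: lq.
    rewrite qq; have -> : (i - n == j - n) = (i == j).
      by apply/eqP/eqP => [/addIr|->].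
    by [].
  have [s [us ns vE]] := fs v.
  exists [seq i + n | i <- s]; split.
  + by rewrite map_inj_uniq // => x y /addIr.
  + move=> i Hi; rewrite ns //; apply: contra Hi => H; apply/mapP; exists (i - n) => //.
    by rewrite subrK.
  + by rewrite big_map {1}vE; apply: eq_bigr => i _; rewrite addrK.
- move=> i j m a Hm Ha; rewrite /homog in Ha.
  have -> : i + j - n = (i - n) + j by rewrite addrAC.
  exact: gdeg_mul.
Qed.

Definition shift : gmod A := @GMod A (galg A) _ _ shift_is_gmod.
End Shift.

(* ---- isomorphism of the Z-algebras \bar A and \bar B ----
   \bar A = (+)_{i,j} \bar A_{ij}, \bar A_{ij} = A_{j-i}, with multiplication
   \bar A_{ij} x \bar A_{jl} -> \bar A_{il} induced by A and local units
   1_i = 1 \in A_0 = \bar A_{ii}.  A k-algebra isomorphism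
   phi : \bar A -> \bar B with phi(1_i) = 1_i maps \bar A_{ij} = 1_i \bar A 1_j
   onto \bar B_{ij}, hence is the same as a family of k-linear bijections
   phi_ij : A_{j-i} -> B_{j-i} compatible with products and units. *)
Definition zbar_iso (A B : gradedAlg) : Prop :=
  exists phi : int -> int -> galg A -> galg B,
    [/\ forall i j, lin (phi i j),
        forall i j a, @homog A (j - i) a -> @homog B (j - i) (phi i j a),
        forall i j a a', @homog A (j - i) a -> @homog A (j - i) a' ->
          phi i j a = phi i j a' -> a = a',
        forall i j b, @homog B (j - i) b ->
          exists2 a, @homog A (j - i) a & phi i j a = b &
        (forall i j l a b, @homog A (j - i) a -> @homog A (l - j) b ->
           phi i l (a * b) = phi i j a * phi j l b) /\
        (forall i, phi i i 1 = 1)].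

End Defs.

(* If phi : \bar A -> \bar B is an isomorphism of Z-algebras with inverse psi,
   every graded A-module M becomes a graded B-module with the same graded space
   and the action m_i . b_d := m_i psi_{i,i+d}(b_d); twisting back by phi gives
   M again, and the twist of A<n> is glued degreewise to B<n> by the maps
   phi_{n,i}.
   Conversely, let F : gr-A -> gr-B be an equivalence with quasi-inverse G.
   As A is connected, End(A<n>) = k and A<n> maps onto the trivial module k<n>.
   The shifts B<m> generate gr-B, so some map G(B<m>) -> A<n> stays nonzero
   after projecting to k<n>; together with End(G(B<m>)) = k this makes A<n>
   and G(B<m>) isomorphic, so F(A<n>) is isomorphic to some B<sigma n>.
   sigma is a bijection of Z, and A_1 <> 0 makes it increasing, so
   sigma n = n + c.  Finally F identifies A_{j-i} = Hom(A<j>, A<i>) with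
   Hom(B<j+c>, B<i+c>) = B_{j-i}, compatibly with composition, which is an
   isomorphism of \bar A onto \bar B. *)

From mathcomp Require Import all_boot all_order all_algebra.
From mathcomp Require Import zify ring.
From Stdlib Require Import ClassicalEpsilon Classical.
Set Implicit Arguments. Unset Strict Implicit. Unset Printing Implicit Defensive.
Import Order.TTheory GRing.Theory Num.Theory.
Local Open Scope ring_scope.

Section LinearMaps.
Variables (k : fieldType) (U V : lmodType k) (f : U -> V).
Hypothesis f_lin : lin f.

Lemma linD u v : f (u + v) = f u + f v.
Proof. by have := f_lin 1 u v; rewrite !scale1r. Qed.

Lemma lin0 : f 0 = 0.
Proof. by apply: (addrI (f 0)); rewrite -linD !addr0. Qed.

Lemma linZ c u : f (c *: u) = c *: f u.
Proof. by rewrite -[c *: u]addr0 f_lin lin0 addr0. Qed.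

Lemma lin_sum (I : Type) (s : seq I) (F : I -> U) :
  f (\sum_(i <- s) F i) = \sum_(i <- s) f (F i).
Proof.
elim: s => [|x s IH]; first by rewrite !big_nil lin0.
by rewrite !big_cons linD IH.
Qed.

Lemma lin_big (I : Type) (s : seq I) (F : I -> U -> V) :
  (forall i, lin (F i)) -> lin (fun u => \sum_(i <- s) F i u).
Proof.
move=> F_lin c u v; rewrite scaler_sumr -big_split.
by apply: eq_bigr => i _; apply: F_lin.
Qed.
End LinearMaps.

Section BigSupport.
Variable V : zmodType.

Lemma eq_big_support (s t : seq int) (F : int -> V) : uniq s -> uniq t ->
  (forall i, i \notin s -> F i = 0) -> (forall i, i \notin t -> F i = 0) ->
  \sum_(i <- s) F i = \sum_(i <- t) F i.
Proof.
move=> us ut hs ht.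
have restrict (r r' : seq int) : (forall i, i \notin r' -> F i = 0) ->
    \sum_(i <- r) F i = \sum_(i <- r | i \in r') F i.
  move=> hr'; rewrite [RHS]big_mkcond; apply: eq_bigr => i _.
  by case: ifP => // /negbT /hr'.
rewrite (restrict s t) // (restrict t s) // -[LHS]big_filter -[RHS]big_filter.
apply: perm_big; apply: uniq_perm; rewrite ?filter_uniq // => i.
by rewrite !mem_filter andbC.
Qed.
End BigSupport.

Section Gradings.
Variables (k : fieldType) (V : lmodType k) (q : int -> V -> V).
Hypothesis q_grading : is_grading q.

Lemma grading_lin i : lin (q i). Proof. by case: q_grading. Qed.

Lemma gradingK i j v : q i (q j v) = if i == j then q j v else 0.
Proof. by case: q_grading. Qed.

Lemma grading_idem i v : q i (q i v) = q i v.
Proof. by rewrite gradingK eqxx. Qed.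

Lemma grading_homog_eq0 i j v : q j v = v -> i != j -> q i v = 0.
Proof. by move=> <- /negPf nij; rewrite gradingK nij. Qed.

Lemma grading_has_support v :
  exists s : seq int, uniq s /\ forall i, i \notin s -> q i v = 0.
Proof. by case: q_grading => _ _ /(_ v) [s [us hs _]]; exists s. Qed.

Definition support v : seq int :=
  proj1_sig (constructive_indefinite_description _ (grading_has_support v)).

Lemma support_uniq v : uniq (support v).
Proof. by rewrite /support; case: constructive_indefinite_description => s []. Qed.

Lemma support_eq0 v i : i \notin support v -> q i v = 0.
Proof.
by rewrite /support; case: constructive_indefinite_description => s [_ hs] /=; apply: hs.
Qed.

Lemma support_decomp v : v = \sum_(i <- support v) q i v.
Proof.
case: q_grading => _ _ /(_ v) [t [ut ht vE]].
by rewrite {1}vE; apply: eq_big_support ut (support_uniq v) ht (@support_eq0 v).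
Qed.

Lemma eq_lin_homog (W : lmodType k) (f g : V -> W) : lin f -> lin g ->
  (forall i v, q i v = v -> f v = g v) -> forall v, f v = g v.
Proof.
move=> f_lin g_lin fg v; rewrite (support_decomp v) !(lin_sum f_lin) !(lin_sum g_lin).
by apply: eq_bigr => i _; apply/fg/grading_idem.
Qed.

Section HomogSum.
Variables (W : lmodType k) (G : int -> V -> W).
Hypothesis G_lin : forall i, lin (G i).

Definition homog_sum v : W := \sum_(i <- support v) G i (q i v).

Lemma homog_sumE (s : seq int) v : uniq s -> (forall i, i \notin s -> q i v = 0) ->
  homog_sum v = \sum_(i <- s) G i (q i v).
Proof.
move=> us hs; apply: eq_big_support => //; first exact: support_uniq.
- by move=> i /support_eq0 ->; apply: lin0.
- by move=> i /hs ->; apply: lin0.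
Qed.

Lemma homog_sum_homog i v : q i v = v -> homog_sum v = G i v.
Proof.
move=> hv; rewrite (@homog_sumE [:: i]) // ?big_seq1 ?hv // => j.
by rewrite inE; apply: grading_homog_eq0.
Qed.

Lemma homog_sum_lin : lin homog_sum.
Proof.
move=> c u v; set s := undup (support u ++ support v).
have us : uniq s by exact: undup_uniq.
have [hu hv] : (forall i, i \notin s -> q i u = 0) /\ (forall i, i \notin s -> q i v = 0).
  by split=> i; rewrite mem_undup mem_cat negb_or => /andP[/support_eq0 ? /support_eq0 ?].
rewrite !(homog_sumE us) // => [|i si]; last by rewrite grading_lin hu ?hv ?scaler0 ?addr0.
rewrite scaler_sumr -big_split; apply: eq_bigr => i _.
by rewrite grading_lin G_lin.
Qed.
End HomogSum.

Lemma homog_sum_id v : homog_sum (fun _ x => x) v = v.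
Proof. exact/esym/support_decomp. Qed.
End Gradings.

Section GradedModules.
Variables (k : fieldType) (A : gradedAlg k).

Lemma gdeg_lin i : lin (@gdeg k A i). Proof. exact: grading_lin (gdeg_grading A) i. Qed.

Lemma gdegK i j (a : galg A) : gdeg i (gdeg j a) = if i == j then gdeg j a else 0.
Proof. exact: gradingK (gdeg_grading A) i j a. Qed.

Lemma gdeg_idem i (a : galg A) : homog i (gdeg i a).
Proof. exact: grading_idem (gdeg_grading A) i a. Qed.

Section Module.
Variable M : gmod A.

Lemma gact_linl a : lin (fun m : gcar M => gact m a).
Proof. by case: (gmodP M) => [[]]. Qed.

Lemma gact_linr (m : gcar M) : lin (gact m).
Proof. by case: (gmodP M) => [[]]. Qed.

Lemma gact1 (m : gcar M) : gact m 1 = m.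
Proof. by case: (gmodP M) => _ []. Qed.

Lemma gactA (m : gcar M) a b : gact (gact m a) b = gact m (a * b).
Proof. by case: (gmodP M) => _ []. Qed.

Lemma gq_grading : is_grading (@gq _ _ M).
Proof. by case: (gmodP M). Qed.

Lemma gq_lin i : lin (@gq _ _ M i). Proof. exact: grading_lin gq_grading i. Qed.

Lemma gq_gact i j (m : gcar M) a :
  gq i m = m -> homog j a -> gq (i + j) (gact m a) = gact m a.
Proof. by case: (gmodP M) => _ _ _; apply. Qed.

Lemma gq_gact_gdeg i t (m : gcar M) a :
  gq i m = m -> gq t (gact m a) = gact m (gdeg (t - i) a).
Proof.
move=> hm; move: a; apply: (eq_lin_homog (gdeg_grading A)) => [c u v|c u v|d a ha].
- by rewrite gact_linr gq_lin.
- by rewrite gdeg_lin gact_linr.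
rewrite -(gq_gact hm ha) (gradingK gq_grading) (gq_gact hm ha) -{2}ha gdegK.
rewrite [t - i == d]subr_eq [d + i]addrC.
by case: ifP; rewrite ?ha ?(lin0 (gact_linr m)).
Qed.
End Module.

Section Morphisms.
Variables (M N : gmod A) (f : ghom M N).

Lemma ghom_lin : lin f. Proof. by case: (ghP f). Qed.

Lemma ghom_act m a : f (gact m a) = gact (f m) a. Proof. by case: (ghP f). Qed.

Lemma ghom_gq i m : f (gq i m) = gq i (f m). Proof. by case: (ghP f). Qed.

Lemma ghom0 : f 0 = 0. Proof. exact: lin0 ghom_lin. Qed.
End Morphisms.

Section Constructions.
Variables (M N P : gmod A).

Definition comp_ghom (f : ghom M N) (g : ghom N P) : ghom M P.
Proof.
refine (@GHom k A M P (fun x => g (f x)) _); split.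
- by move=> c u v; rewrite !ghom_lin.
- by move=> m a; rewrite !ghom_act.
- by move=> i m; rewrite !ghom_gq.
Defined.

Lemma comp_ghomE f g x : comp_ghom f g x = g (f x). Proof. by []. Qed.

Definition scale_ghom (c : k) (f : ghom M N) : ghom M N.
Proof.
refine (@GHom k A M N (fun x => c *: f x) _); split.
- by move=> d u v; rewrite ghom_lin scalerDr !scalerA mulrC.
- by move=> m a; rewrite (linZ (gact_linl a)) ghom_act.
- by move=> i m; rewrite (linZ (gq_lin i)) ghom_gq.
Defined.

Lemma scale_ghomE c f x : scale_ghom c f x = c *: f x. Proof. by []. Qed.

Definition zero_ghom : ghom M N.
Proof.
refine (@GHom k A M N (fun _ => 0) _); split.
- by move=> d u v; rewrite scaler0 addr0.
- by move=> m a; rewrite (lin0 (gact_linl a)).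
- by move=> i m; rewrite (lin0 (gq_lin i)).
Defined.

Definition id_ghom : ghom M M.
Proof. by refine (@GHom k A M M id _); split. Defined.
End Constructions.

Lemma giso_sym (M N : gmod A) : giso M N -> giso N M.
Proof. by case=> f [g [fK gK]]; exists g, f. Qed.

Lemma giso_trans (M N P : gmod A) : giso M N -> giso N P -> giso M P.
Proof.
case=> f [g [fK gK]] [f' [g' [fK' gK']]].
by exists (comp_ghom f f'), (comp_ghom g' g); split=> x; rewrite !comp_ghomE ?fK' ?fK ?gK ?gK'.
Qed.

Section ShiftMap.
Variables (M : gmod A) (m : int) (x : gcar M).

Definition shift_map : ghom (shift A m) M.
Proof.
refine (@GHom k A (shift A m) M (gact (gq m x)) _); split.
- exact: gact_linr.
- by move=> b a /=; rewrite gactA.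
- by move=> i b /=; rewrite (gq_gact_gdeg _ _ (grading_idem (gq_grading M) m x)).
Defined.

Lemma shift_mapE b : shift_map b = gact (gq m x) b. Proof. by []. Qed.

Lemma shift_map1 : shift_map 1 = gq m x. Proof. exact: gact1. Qed.
End ShiftMap.

Lemma ghom_shiftE (M : gmod A) m (f : ghom (shift A m) M) b : f b = gact (f 1) b.
Proof. by rewrite -ghom_act /= mul1r. Qed.

Definition lmul i j (a : galg A) : ghom (shift A j) (shift A i) :=
  shift_map j (a : gcar (shift A i)).

Lemma lmulE i j a x : lmul i j a x = gdeg (j - i) a * x. Proof. by []. Qed.

Section Connected.
Hypothesis A_conn : connected_graded A.

Lemma homog1 : homog 0 (1 : galg A).
Proof. by apply/(proj2 A_conn 1); exists 1; rewrite scale1r. Qed.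

Lemma ghom_shift1 (M : gmod A) m (f : ghom (shift A m) M) : gq m (f 1) = f 1.
Proof. by rewrite -ghom_gq /= subrr homog1. Qed.

Lemma ghom_shift_lmul i j (f : ghom (shift A j) (shift A i)) x : f x = lmul i j (f 1) x.
Proof. by rewrite lmulE (ghom_shiftE f x); have /= -> := ghom_shift1 f. Qed.

Lemma shift_end_scalar m (f : ghom (shift A m) (shift A m)) :
  exists c : k, forall x, f x = c *: x.
Proof.
have f1 := ghom_shift1 f; rewrite /= subrr in f1.
have [c fc] := proj1 (proj2 A_conn (f 1)) f1.
by exists c => x; rewrite ghom_shiftE fc /= mulr_algl.
Qed.

Lemma shift_ghom_eq0 m m' (f : ghom (shift A m') (shift A m)) : m' < m ->
  forall x, f x = 0.
Proof.
move=> lt x; have f1 := ghom_shift1 f; rewrite /= (proj1 A_conn (m' - m)) in f1.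
  by rewrite ghom_shiftE -f1 /= mul0r.
by rewrite subr_lt0.
Qed.

Lemma shift_giso_inj m m' : giso (shift A m) (shift A m') -> m = m'.
Proof.
case=> f [g [fK gK]]; case: (ltrgtP m m') => // lt; exfalso.
  by have := fK 1; rewrite (shift_ghom_eq0 f lt) ghom0 => /esym/eqP; rewrite oner_eq0.
by have := gK 1; rewrite (shift_ghom_eq0 g lt) ghom0 => /esym/eqP; rewrite oner_eq0.
Qed.
End Connected.
End GradedModules.

Section KLinearFunctor.
Variables (k : fieldType) (A B : gradedAlg k) (F : gfunctor A B).
Hypothesis F_klin : is_klin_functor F.

Lemma fmor_id (M : gmod A) (h : ghom M M) :
  (forall x, h x = x) -> forall y, fmor F h y = y.
Proof. by case: F_klin => idF _ _; apply: idF. Qed.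

Lemma fmor_comp (M N P : gmod A) (f : ghom M N) (g : ghom N P) y :
  fmor F (comp_ghom f g) y = fmor F g (fmor F f y).
Proof. by case: F_klin => _ compF _; apply: compF. Qed.

Lemma fmor_lincomb (M N : gmod A) (f g h : ghom M N) (c : k) :
  (forall x, h x = c *: f x + g x) ->
  forall y, fmor F h y = c *: fmor F f y + fmor F g y.
Proof. by case: F_klin => _ _ linF; apply: linF. Qed.

Lemma fmor_eq0 (M N : gmod A) (h : ghom M N) :
  (forall x, h x = 0) -> forall y, fmor F h y = 0.
Proof.
move=> h0 y; rewrite (fmor_lincomb (f := h) (g := h) (h := h) (c := -1)) ?scaleN1r ?addNr // => x.
by rewrite h0 scaler0 addr0.
Qed.

Lemma fmor_scale (M N : gmod A) (f h : ghom M N) (c : k) :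
  (forall x, h x = c *: f x) -> forall y, fmor F h y = c *: fmor F f y.
Proof.
move=> hf y; rewrite (fmor_lincomb (f := f) (g := zero_ghom M N) (h := h) (c := c)) => [|x].
  by rewrite (fmor_eq0 (h := zero_ghom M N)) ?addr0.
by rewrite hf addr0.
Qed.

Lemma fmor_ext (M N : gmod A) (f h : ghom M N) :
  (forall x, h x = f x) -> forall y, fmor F h y = fmor F f y.
Proof.
move=> hf y; rewrite (fmor_scale (f := f) (h := h) (c := 1)) ?scale1r // => x.
by rewrite hf scale1r.
Qed.

Lemma giso_fobj (M N : gmod A) : giso M N -> giso (fobj F M) (fobj F N).
Proof.
case=> f [g [fK gK]]; exists (fmor F f), (fmor F g); split=> y;
  by rewrite -fmor_comp; apply: fmor_id => x; rewrite comp_ghomE.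
Qed.
End KLinearFunctor.

Section UnitIso.
Variables (k : fieldType) (A B : gradedAlg k) (F : gfunctor A B) (G : gfunctor B A).
Hypotheses (G_klin : is_klin_functor G) (FG_unit : unit_iso F G).

Lemma giso_unit (M : gmod A) : giso M (fobj G (fobj F M)).
Proof. by have [eta [eta' [etaK eta'K _]]] := FG_unit; exists (eta M), (eta' M). Qed.

Lemma fmor_inj (M N : gmod A) (f g : ghom M N) :
  (forall y, fmor F f y = fmor F g y) -> forall x, f x = g x.
Proof.
have [eta [eta' [etaK _ etaN]]] := FG_unit => Ffg x.
by rewrite -(etaK N (f x)) -(etaK N (g x)) !etaN (fmor_ext G_klin Ffg).
Qed.

Lemma fmor_eq0_reflect (M N : gmod A) (f : ghom M N) :
  (forall y, fmor F f y = 0) -> forall x, f x = 0.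
Proof.
have [eta [eta' [etaK _ etaN]]] := FG_unit => Ff0 x.
by rewrite -(etaK N (f x)) etaN (fmor_eq0 G_klin Ff0) ghom0.
Qed.
End UnitIso.

Section Equivalence.
Variables (k : fieldType) (A B : gradedAlg k) (F : gfunctor A B) (G : gfunctor B A).
Hypotheses (F_klin : is_klin_functor F) (G_klin : is_klin_functor G).
Hypotheses (FG_unit : unit_iso F G) (GF_unit : unit_iso G F).

Lemma fmor_surj (M N : gmod A) (h : ghom (fobj F M) (fobj F N)) :
  exists f : ghom M N, forall y, fmor F f y = h y.
Proof.
have [eta [eta' [etaK eta'K etaN]]] := FG_unit.
exists (comp_ghom (eta M) (comp_ghom (fmor G h) (eta' N))).
apply: (fmor_inj F_klin GF_unit) => z.
by rewrite -(eta'K M z) -etaN !comp_ghomE !eta'K.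
Qed.

Lemma giso_reflect (M N : gmod A) : giso (fobj F M) (fobj F N) -> giso M N.
Proof.
case=> u [v [uK vK]]; have [f Ff] := fmor_surj u; have [g Fg] := fmor_surj v.
exists f, g; split.
- apply: (fmor_inj G_klin FG_unit (f := comp_ghom f g) (g := id_ghom M)) => y.
  by rewrite fmor_comp // Ff Fg uK (fmor_id F_klin).
- apply: (fmor_inj G_klin FG_unit (f := comp_ghom g f) (g := id_ghom N)) => y.
  by rewrite fmor_comp // Ff Fg vK (fmor_id F_klin).
Qed.
End Equivalence.

Section Augmentation.
Variables (k : fieldType) (A : gradedAlg k).
Hypothesis A_conn : connected_graded A.

Lemma alg_inj : injective (fun c : k => c%:A : galg A).
Proof. exact: (fmorph_inj (GRing.in_alg (galg A))). Qed.

Lemma aug_ex (a : galg A) : exists c : k, gdeg 0 a = c%:A.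
Proof. exact/(proj2 A_conn)/gdeg_idem. Qed.

Definition aug (a : galg A) : k :=
  proj1_sig (constructive_indefinite_description _ (aug_ex a)).

Lemma augE a : gdeg 0 a = (aug a)%:A.
Proof. by rewrite /aug; case: constructive_indefinite_description. Qed.

Lemma aug_lin : lin (aug : galg A -> k^o).
Proof.
move=> c a b; apply: alg_inj => /=.
by rewrite -augE gdeg_lin !augE scalerDl scalerA.
Qed.

Lemma gdeg0M (a b : galg A) : gdeg 0 (a * b) = gdeg 0 a * gdeg 0 b.
Proof.
move: a; apply: (eq_lin_homog (gdeg_grading A)) => [c u v|c u v|i a ha].
- by rewrite mulrDl -scalerAl !gdeg_lin.
- by rewrite gdeg_lin mulrDl -scalerAl.
move: b; apply: (eq_lin_homog (gdeg_grading A)) => [c u v|c u v|j b hb].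
- by rewrite mulrDr -scalerAr !gdeg_lin.
- by rewrite gdeg_lin mulrDr -scalerAr.
have [i_lt0|i_ge0] := ltrP i 0.
  by rewrite -ha (proj1 A_conn _ i_lt0) mul0r (lin0 (gdeg_lin 0)) mul0r.
have [j_lt0|j_ge0] := ltrP j 0.
  by rewrite -hb (proj1 A_conn _ j_lt0) mulr0 (lin0 (gdeg_lin 0)) mulr0.
rewrite -{1}(gdeg_mul ha hb) -{2}ha -{2}hb !gdegK ha hb (gdeg_mul ha hb).
have [->|i_neq0] := eqVneq i 0.
  by rewrite add0r [0 == j]eq_sym; case: eqVneq; rewrite ?mulr0.
by rewrite mul0r; case: ifP => // /eqP; lia.
Qed.

Lemma augM a b : aug (a * b) = aug a * aug b.
Proof. by apply: alg_inj; rewrite /= -augE gdeg0M !augE mulr_algl scalerA. Qed.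

Lemma aug1 : aug 1 = 1.
Proof. by apply: alg_inj; rewrite /= -augE homog1 // scale1r. Qed.

Lemma aug_homog_eq0 j a : homog j a -> j != 0 -> aug a = 0.
Proof.
move=> ha j_neq0; apply: alg_inj; rewrite /= -augE scale0r -ha gdegK.
by rewrite eq_sym (negPf j_neq0).
Qed.

Lemma aug_gdeg0 a : aug (gdeg 0 a) = aug a.
Proof. by apply: alg_inj; rewrite /= -!augE gdeg_idem. Qed.

Section TrivialModule.
Variable n : int.

Lemma triv_is_gmod :
  is_gmod (fun (m : k^o) a => m * aug a) (fun i (m : k^o) => if i == n then m else 0).
Proof.
split.
- split=> [a c u v|m c u v] /=; first by rewrite mulrDl scalerAl.
  by rewrite aug_lin mulrDr scalerAr.
- by split=> [m|m a b]; rewrite ?aug1 ?mulr1 // augM mulrA.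
- split=> [i c u v|i j v|v].
  + by case: ifP; rewrite ?scaler0 ?addr0.
  + case: (eqVneq i n) => [->|i_neq_n]; first by rewrite eq_sym; case: ifP.
    by case: (eqVneq i j) => [<-|//]; rewrite (negPf i_neq_n).
  + exists [:: n]; split=> // [i|]; last by rewrite big_seq1 eqxx.
    by rewrite inE => /negPf ->.
- move=> i j m a hm ha; case: (eqVneq j 0) => [j0|j_neq0].
    by case: (eqVneq i n) hm => [->|_ <-]; rewrite j0 addr0 ?eqxx ?mul0r //; case: ifP.
  by rewrite (aug_homog_eq0 ha j_neq0) mulr0; case: ifP.
Qed.

Definition triv_gmod : gmod A := GMod triv_is_gmod.

Definition aug_ghom : ghom (shift A n) triv_gmod.
Proof.
refine (@GHom k A (shift A n) triv_gmod (aug : galg A -> k^o) _); split.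
- exact: aug_lin.
- by move=> b a /=; rewrite augM.
- move=> i b /=; case: (eqVneq i n) => [->|i_neq_n]; first by rewrite subrr aug_gdeg0.
  by apply: (aug_homog_eq0 (gdeg_idem _ _)); rewrite subr_eq0.
Defined.

Lemma aug_ghomE a : aug_ghom a = aug a. Proof. by []. Qed.
End TrivialModule.
End Augmentation.

Lemma giso_of_scalar_composites (k : fieldType) (A : gradedAlg k) (M N : gmod A)
    (u : ghom M N) (g : ghom N M) (c d : k) (m : gcar M) :
  (forall x, g (u x) = c *: x) -> (forall y, u (g y) = d *: y) ->
  c != 0 -> m != 0 -> giso M N.
Proof.
move=> gu ug c_neq0 m_neq0.
have um_neq0 : u m != 0.
  apply: contraNneq m_neq0 => um0; have /esym/eqP := gu m.
  by rewrite um0 ghom0 scaler_eq0 (negPf c_neq0).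
have dc : d = c.
  have : (d - c) *: u m == 0 by rewrite scalerBl subr_eq0 -ug gu (linZ (ghom_lin u)).
  by rewrite scaler_eq0 (negPf um_neq0) orbF subr_eq0 => /eqP.
rewrite {}dc in ug.
exists u, (scale_ghom c^-1 g); split=> y; rewrite scale_ghomE.
  by rewrite gu scalerA mulVf // scale1r.
by rewrite (linZ (ghom_lin u)) ug scalerA mulVf // scale1r.
Qed.

Section ShiftImage.
Variables (k : fieldType) (A B : gradedAlg k).
Hypotheses (A_conn : connected_graded A) (B_conn : connected_graded B).
Variables (F : gfunctor A B) (G : gfunctor B A).
Hypotheses (F_klin : is_klin_functor F) (G_klin : is_klin_functor G).
Hypotheses (FG_unit : unit_iso F G) (GF_unit : unit_iso G F).

Lemma ghom_eq0_on_shift_images (M N : gmod A) (f : ghom M N) :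
  (forall m (g : ghom (fobj G (shift B m)) M) w, f (g w) = 0) -> forall x, f x = 0.
Proof.
move=> fg0; apply: (fmor_eq0_reflect G_klin FG_unit) => y.
rewrite (support_decomp (gq_grading _) y) (lin_sum (ghom_lin _)) big1 // => m _.
have [ep [ep' [epK _ _]]] := GF_unit.
have [g Fg] := fmor_surj F_klin FG_unit GF_unit
  (comp_ghom (ep' (shift B m)) (shift_map m y)).
rewrite -shift_map1 -(epK (shift B m) 1) -[shift_map _ _ _]/(comp_ghom _ _ _) -Fg.
by rewrite -(fmor_comp F_klin) (fmor_eq0 F_klin (h := comp_ghom g f)) // => x; apply: fg0.
Qed.

(* The augmentation A<n> -> k<n> is nonzero, and the images G(B<m>) generate gr-A. *)
Lemma exists_shift_image_aug_neq0 n :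
  exists m (g : ghom (fobj G (shift B m)) (shift A n)) w, aug A_conn (g w) != 0.
Proof.
apply: NNPP => none; suff /eqP : (1 : k) = 0 by rewrite oner_eq0.
have := ghom_eq0_on_shift_images (f := aug_ghom A_conn n) _ 1.
rewrite aug_ghomE aug1; apply=> m g w; rewrite aug_ghomE.
by apply/eqP/negbNE/negP => nz; apply: none; exists m, g, w.
Qed.

Lemma shift_image_end_scalar m (h : ghom (fobj G (shift B m)) (fobj G (shift B m))) :
  exists d : k, forall z, h z = d *: z.
Proof.
have [f Gf] := fmor_surj G_klin GF_unit FG_unit h.
have [d fd] := shift_end_scalar B_conn f.
exists d => z; rewrite -Gf (fmor_scale G_klin (f := id_ghom _) (h := f) (c := d)) //.
by rewrite fmor_id.
Qed.

Lemma fobj_shift_giso n : exists m, giso (fobj F (shift A n)) (shift B m).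
Proof.
have [m [g [w gw_neq0]]] := exists_shift_image_aug_neq0 n.
pose u := shift_map n w.
have gu a : g (u a) = aug A_conn (g w) *: a.
  by rewrite shift_mapE ghom_act ghom_gq /= subrr augE /= mulr_algl.
have [d ug] := shift_image_end_scalar (comp_ghom g u).
have iso := giso_of_scalar_composites gu ug gw_neq0 (oner_neq0 _).
exists m; apply: giso_trans (giso_fobj F_klin iso) _.
exact: giso_sym (giso_unit GF_unit _).
Qed.
End ShiftImage.

Lemma int_incr_homo (s : int -> int) : (forall n, s n < s (n + 1)) ->
  {homo s : n m / n < m}.
Proof.
move=> s_incr n m lt_nm.
have [j ->] : exists j : nat, m = n + j.+1%:Z by exists (absz (m - n - 1)%R); lia.
elim: j => [|j IH]; first exact: s_incr.
by apply: lt_trans IH _; have := s_incr (n + j.+1%:Z); rewrite -addrA -PoszD addn1.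
Qed.

Lemma int_incr_surj_translation (s : int -> int) :
  (forall n, s n < s (n + 1)) -> (forall m, exists n, s n = m) ->
  forall n, s n = n + s 0.
Proof.
move=> s_incr s_surj; have s_lt := int_incr_homo s_incr.
have s_step (n : int) : s (n + 1) = s n + 1.
  have [m sm] := s_surj (s n + 1).
  have [lt_m|gt_m|<- //] := ltgtP m (n + 1).
    move: lt_m; rewrite ltzD1 le_eqVlt => /predU1P[mn|/s_lt]; last by rewrite sm; lia.
    by move: sm; rewrite mn; lia.
  by have := s_lt _ _ gt_m; have := s_incr n; rewrite sm; lia.
elim/int_rec => [|j IH|j IH]; first by rewrite add0r.
  rewrite -addn1 PoszD s_step IH; lia.
have := s_step (- j.+1%:Z); rewrite (_ : - j.+1%:Z + 1 = - j%:Z) ?IH; lia.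
Qed.

Lemma giso_family (k : fieldType) (A : gradedAlg k) (I : Type) (M N : I -> gmod A) :
  (forall i, giso (M i) (N i)) ->
  exists (f : forall i, ghom (M i) (N i)) (g : forall i, ghom (N i) (M i)),
    (forall i x, g i (f i x) = x) /\ (forall i y, f i (g i y) = y).
Proof.
move=> iso; pose f i := proj1_sig (constructive_indefinite_description _ (iso i)).
have g_ex i : exists g : ghom (N i) (M i),
    (forall x, g (f i x) = x) /\ (forall y, f i (g y) = y).
  exact: proj2_sig (constructive_indefinite_description _ (iso i)).
exists f, (fun i => proj1_sig (constructive_indefinite_description _ (g_ex i))).
by split=> i; case: constructive_indefinite_description => g [].
Qed.

Section Transport.
Variables (k : fieldType) (A B : gradedAlg k).
Hypotheses (A_conn : connected_graded A) (B_conn : connected_graded B).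
Variables (F : gfunctor A B) (G : gfunctor B A).
Hypotheses (F_klin : is_klin_functor F) (G_klin : is_klin_functor G).
Hypotheses (FG_unit : unit_iso F G) (GF_unit : unit_iso G F).
Variables (c : int) (tau : forall n, ghom (fobj F (shift A n)) (shift B (n + c)))
  (tau' : forall n, ghom (shift B (n + c)) (fobj F (shift A n))).
Hypotheses (tauK : forall n x, tau' n (tau n x) = x) (tau'K : forall n y, tau n (tau' n y) = y).

Definition transport i j a : ghom (shift B (j + c)) (shift B (i + c)) :=
  comp_ghom (tau' j) (comp_ghom (fmor F (lmul i j a)) (tau i)).

Definition zbar_map i j (a : galg A) : galg B := transport i j a 1.

Lemma transportE i j a y : transport i j a y = zbar_map i j a * y.
Proof. exact: ghom_shiftE. Qed.

Lemma zbar_map_lin i j : lin (zbar_map i j).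
Proof.
move=> d a b; rewrite /zbar_map /transport !comp_ghomE -(ghom_lin (tau i)).
congr (tau i _); apply: fmor_lincomb => // x.
by rewrite !lmulE gdeg_lin mulrDl -scalerAl.
Qed.

Lemma zbar_map_homog i j a : homog (j - i) (zbar_map i j a).
Proof.
have := ghom_shift1 B_conn (transport i j a).
by rewrite /= (_ : j + c - (i + c) = j - i) //; ring.
Qed.

Lemma zbar_map_inj i j a a' : homog (j - i) a -> homog (j - i) a' ->
  zbar_map i j a = zbar_map i j a' -> a = a'.
Proof.
move=> ha ha' e.
suff lmul_eq x : lmul i j a x = lmul i j a' x.
  by have := lmul_eq 1; rewrite !lmulE !mulr1 ha ha'.
apply: (fmor_inj G_klin FG_unit) => y {x}.
have := transportE i a (tau j y); rewrite e -transportE /transport !comp_ghomE tauK.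
by move/(congr1 (tau' i)); rewrite !tauK.
Qed.

Lemma zbar_map_surj (i j : int) b : homog (j - i) b ->
  exists2 a, homog (j - i) a & zbar_map i j a = b.
Proof.
move=> hb; have jci : j + c - (i + c) = j - i by ring.
have [f Ff] := fmor_surj F_klin FG_unit GF_unit
  (comp_ghom (tau j) (comp_ghom (lmul (i + c) (j + c) b) (tau' i))).
exists (f 1); first by have := ghom_shift1 A_conn f; rewrite /= /homog.
rewrite /zbar_map /transport !comp_ghomE.
rewrite (fmor_ext F_klin (f := f) (h := lmul i j (f 1))); last first.
  by move=> x; rewrite -ghom_shift_lmul.
by rewrite Ff !comp_ghomE !tau'K lmulE jci hb mulr1.
Qed.

Lemma zbar_mapM (i j l : int) a b : homog (j - i) a -> homog (l - j) b ->
  zbar_map i l (a * b) = zbar_map i j a * zbar_map j l b.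
Proof.
move=> ha hb; have hab : homog (l - i) (a * b).
  by rewrite (_ : l - i = (j - i) + (l - j)); [exact: gdeg_mul | ring].
rewrite -transportE /zbar_map /transport !comp_ghomE tauK -(fmor_comp F_klin).
congr (tau i _); apply: fmor_ext => // x.
by rewrite !comp_ghomE !lmulE ha hb hab mulrA.
Qed.

Lemma zbar_map1 (i : int) : zbar_map i i 1 = 1.
Proof.
rewrite /zbar_map /transport !comp_ghomE (fmor_id F_klin) ?tau'K // => x.
by rewrite lmulE subrr homog1 // mul1r.
Qed.

Lemma zbar_iso_of_translation : zbar_iso A B.
Proof.
exists zbar_map; split.
- exact: zbar_map_lin.
- by move=> i j a _; apply: zbar_map_homog.
- exact: zbar_map_inj.
- exact: zbar_map_surj.
- by split; [apply: zbar_mapM | apply: zbar_map1].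
Qed.
End Transport.

Lemma zbar_iso_of_shift_giso (k : fieldType) (A B : gradedAlg k)
    (F : gfunctor A B) (G : gfunctor B A) (c : int) :
  connected_graded A -> connected_graded B ->
  is_klin_functor F -> is_klin_functor G -> unit_iso F G -> unit_iso G F ->
  (forall n, giso (fobj F (shift A n)) (shift B (n + c))) -> zbar_iso A B.
Proof.
move=> A_conn B_conn F_klin G_klin FG_unit GF_unit /giso_family [tau [tau' [tauK tau'K]]].
exact: (zbar_iso_of_translation A_conn B_conn F_klin G_klin FG_unit GF_unit tauK tau'K).
Qed.

Section ShiftPermutation.
Variables (k : fieldType) (A B : gradedAlg k).
Hypotheses (A_conn : connected_graded A) (B_conn : connected_graded B).
Hypothesis A1_neq0 : exists a : galg A, gdeg 1 a != 0.
Variables (F : gfunctor A B) (G : gfunctor B A).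
Hypotheses (F_klin : is_klin_functor F) (G_klin : is_klin_functor G).
Hypotheses (FG_unit : unit_iso F G) (GF_unit : unit_iso G F).

Definition sigma n : int := proj1_sig (constructive_indefinite_description _
  (fobj_shift_giso A_conn B_conn F_klin G_klin FG_unit GF_unit n)).

Lemma sigma_giso n : giso (fobj F (shift A n)) (shift B (sigma n)).
Proof. by rewrite /sigma; case: constructive_indefinite_description. Qed.

Lemma sigma_inj : injective sigma.
Proof.
move=> n n' e; apply: (shift_giso_inj A_conn).
apply: (giso_reflect F_klin G_klin FG_unit GF_unit).
by apply: giso_trans (sigma_giso n) _; rewrite e; apply/giso_sym/sigma_giso.
Qed.

Lemma sigma_surj m : exists n, sigma n = m.
Proof.
have [n iso] := fobj_shift_giso B_conn A_conn G_klin F_klin GF_unit FG_unit m.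
exists n; apply/esym/(shift_giso_inj B_conn).
apply: giso_trans (giso_unit GF_unit _) _.
exact: giso_trans (giso_fobj F_klin iso) (sigma_giso n).
Qed.

(* A_1 <> 0 gives a nonzero map A<n+1> -> A<n>, whereas every map
   B<m'> -> B<m> with m' < m vanishes. *)
Lemma sigma_le n : sigma n <= sigma (n + 1).
Proof.
rewrite leNgt; apply/negP => lt_sigma.
have [a a1_neq0] := A1_neq0.
have [f [f' [fK _]]] := giso_family (fun n => sigma_giso n).
pose h := comp_ghom (f' (n + 1)) (comp_ghom (fmor F (lmul n (n + 1) a)) (f n)).
have Fa0 y : fmor F (lmul n (n + 1) a) y = 0.
  have := shift_ghom_eq0 B_conn h lt_sigma (f (n + 1) y).
  by rewrite !comp_ghomE fK => /(congr1 (f' n)); rewrite fK ghom0.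
have := fmor_eq0_reflect G_klin FG_unit Fa0 1.
by rewrite lmulE mulr1 [n + 1]addrC addrK => /eqP; apply/negP.
Qed.

Lemma sigma_incr n : sigma n < sigma (n + 1).
Proof. by rewrite lt_neqAle sigma_le andbT (inj_eq sigma_inj); lia. Qed.

Lemma sigma_translation n : sigma n = n + sigma 0.
Proof. exact: int_incr_surj_translation sigma_incr sigma_surj n. Qed.
End ShiftPermutation.

Lemma zbar_iso_of_gr_equiv (k : fieldType) (A B : gradedAlg k) :
  connected_graded A -> connected_graded B -> (exists a : galg A, gdeg 1 a != 0) ->
  gr_equiv A B -> zbar_iso A B.
Proof.
move=> A_conn B_conn A1_neq0 [F [F_klin [G [G_klin FG_unit GF_unit]]]].
pose sigma0 := sigma A_conn B_conn F_klin G_klin FG_unit GF_unit 0.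
have shift_giso n : giso (fobj F (shift A n)) (shift B (n + sigma0)).
  by rewrite -sigma_translation //; apply: sigma_giso.
exact: zbar_iso_of_shift_giso A_conn B_conn F_klin G_klin FG_unit GF_unit shift_giso.
Qed.

Definition zbar_morph (k : fieldType) (A B : gradedAlg k)
    (phi : int -> int -> galg A -> galg B) : Prop :=
  [/\ forall i j, lin (phi i j),
      forall i j a, homog (j - i) a -> homog (j - i) (phi i j a),
      forall i j l a a', homog (j - i) a -> homog (l - j) a' ->
        phi i l (a * a') = phi i j a * phi j l a' &
      forall i, phi i i 1 = 1].

Section ZbarMorph.
Variables (k : fieldType) (A B : gradedAlg k) (phi : int -> int -> galg A -> galg B).
Hypothesis phi_morph : zbar_morph phi.

Lemma zbar_morph_lin i j : lin (phi i j). Proof. by case: phi_morph. Qed.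

Lemma zbar_morph_homog i j a : homog (j - i) a -> homog (j - i) (phi i j a).
Proof. by case: phi_morph => _ + _ _; apply. Qed.

Lemma zbar_morph_homogD i d a : homog d a -> homog d (phi i (i + d) a).
Proof. by move=> ha; have := @zbar_morph_homog i (i + d) a; rewrite addrC addKr; apply. Qed.

Lemma zbar_morphM i j l a a' : homog (j - i) a -> homog (l - j) a' ->
  phi i l (a * a') = phi i j a * phi j l a'.
Proof. by case: phi_morph => _ _ + _; apply. Qed.

Lemma zbar_morph1 i : phi i i 1 = 1. Proof. by case: phi_morph. Qed.
End ZbarMorph.

Section Twist.
Variables (k : fieldType) (A B : gradedAlg k) (psi : int -> int -> galg B -> galg A).
Hypotheses (B_conn : connected_graded B) (psi_morph : zbar_morph psi).

Section TwistModule.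
Variable M : gmod A.

Definition twist_act (m : gcar M) (b : galg B) : gcar M :=
  homog_sum (gq_grading M)
    (fun i x => homog_sum (gdeg_grading B) (fun d y => gact x (psi i (i + d) y)) b) m.

Lemma psi_gact_lin (x : gcar M) (i d : int) : lin (fun y => gact x (psi i (i + d) y)).
Proof. by move=> c u v; rewrite zbar_morph_lin // gact_linr. Qed.

Lemma twist_component_lin b i :
  lin (fun x : gcar M => homog_sum (gdeg_grading B) (fun d y => gact x (psi i (i + d) y)) b).
Proof. by apply: lin_big => d; apply: gact_linl. Qed.

Lemma twist_act_homog i d m b : gq i m = m -> homog d b ->
  twist_act m b = gact m (psi i (i + d) b).
Proof.
move=> hm hb; rewrite /twist_act (homog_sum_homog _ (twist_component_lin b) hm).
by rewrite (homog_sum_homog (gdeg_grading B) (psi_gact_lin m i) hb).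
Qed.

Lemma twist_act_linl b : lin (twist_act^~ b).
Proof. exact: homog_sum_lin (twist_component_lin b). Qed.

Lemma twist_act_linr m : lin (twist_act m).
Proof.
by apply: lin_big => i; apply: homog_sum_lin (psi_gact_lin _ i).
Qed.

Lemma twist_act1 m : twist_act m 1 = m.
Proof.
rewrite -[RHS](homog_sum_id (gq_grading M)); apply: eq_bigr => i _.
by rewrite (homog_sum_homog _ (psi_gact_lin _ i) (homog1 B_conn)) addr0 zbar_morph1 // gact1.
Qed.

Lemma twist_act_gq i j m b : gq i m = m -> homog j b ->
  gq (i + j) (twist_act m b) = twist_act m b.
Proof.
move=> hm hb; rewrite (twist_act_homog hm hb).
exact/(gq_gact hm)/(zbar_morph_homogD psi_morph).
Qed.

Lemma twist_actA m b b' : twist_act (twist_act m b) b' = twist_act m (b * b').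
Proof.
move: m; apply: (eq_lin_homog (gq_grading M)) => [c u v|c u v|i m hm].
- by rewrite !twist_act_linl.
- exact: twist_act_linl.
move: b; apply: (eq_lin_homog (gdeg_grading B)) => [c u v|c u v|d b hb].
- by rewrite twist_act_linr twist_act_linl.
- by rewrite mulrDl -scalerAl twist_act_linr.
move: b'; apply: (eq_lin_homog (gdeg_grading B)) => [c u v|c u v|e b' hb'].
- exact: twist_act_linr.
- by rewrite mulrDr -scalerAr twist_act_linr.
have hbb' : homog (d + e) (b * b') by exact: gdeg_mul.
have hpsi := zbar_morph_homogD psi_morph i hb.
rewrite (twist_act_homog hm hb) (twist_act_homog (gq_gact hm hpsi) hb').
rewrite (twist_act_homog hm hbb') gactA addrA (zbar_morphM psi_morph (j := i + d)) //.
all: by rewrite [X in X - _]addrC addrK.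
Qed.

Lemma twist_is_gmod : is_gmod twist_act (@gq _ _ M).
Proof.
split.
- by split; [apply: twist_act_linl | apply: twist_act_linr].
- by split; [apply: twist_act1 | apply: twist_actA].
- exact: gq_grading.
- exact: twist_act_gq.
Qed.

Definition twist_gmod : gmod B := GMod twist_is_gmod.
End TwistModule.

Lemma ghom_twist_act (M N : gmod A) (f : ghom M N) m b :
  f (twist_act m b) = twist_act (f m) b.
Proof.
move: m; apply: (eq_lin_homog (gq_grading M)) => [c u v|c u v|i m hm].
- by rewrite twist_act_linl ghom_lin.
- by rewrite ghom_lin twist_act_linl.
move: b; apply: (eq_lin_homog (gdeg_grading B)) => [c u v|c u v|d b hb].
- by rewrite twist_act_linr ghom_lin.
- exact: twist_act_linr.
have hfm : gq i (f m) = f m by rewrite -ghom_gq hm.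
by rewrite (twist_act_homog hm hb) (twist_act_homog hfm hb) ghom_act.
Qed.

Definition twist_ghom (M N : gmod A) (f : ghom M N) : ghom (twist_gmod M) (twist_gmod N).
Proof.
refine (@GHom k B (twist_gmod M) (twist_gmod N) f _); split.
- exact: (ghom_lin f).
- exact: ghom_twist_act.
- exact: (ghom_gq f).
Defined.

Definition twist : gfunctor A B := GFunctor twist_ghom.

Lemma twist_klin : is_klin_functor twist.
Proof. by split=> /= *; auto. Qed.
End Twist.

Section Glue.
Variables (k : fieldType) (C : gradedAlg k) (M N : gmod C) (chi : int -> gcar M -> gcar N).
Hypotheses (chi_lin : forall i, lin (chi i))
  (chi_homog : forall i m, gq i m = m -> gq i (chi i m) = chi i m)
  (chi_act : forall i d m c, gq i m = m -> homog d c ->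
     chi (i + d) (gact m c) = gact (chi i m) c).

Definition glue (m : gcar M) : gcar N := homog_sum (gq_grading M) chi m.

Lemma glue_lin : lin glue. Proof. exact: homog_sum_lin. Qed.

Lemma glue_homog i m : gq i m = m -> glue m = chi i m.
Proof. exact: homog_sum_homog. Qed.

Lemma glue_act m c : glue (gact m c) = gact (glue m) c.
Proof.
move: m; apply: (eq_lin_homog (gq_grading M)) => [d u v|d u v|i m hm].
- by rewrite gact_linl glue_lin.
- by rewrite glue_lin gact_linl.
move: c; apply: (eq_lin_homog (gdeg_grading C)) => [d u v|d u v|e c hc].
- by rewrite gact_linr glue_lin.
- exact: gact_linr.
by rewrite (glue_homog (gq_gact hm hc)) (glue_homog hm) chi_act.
Qed.

Lemma glue_gq i m : glue (gq i m) = gq i (glue m).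
Proof.
move: m; apply: (eq_lin_homog (gq_grading M)) => [c u v|c u v|j m hm].
- by rewrite gq_lin glue_lin.
- by rewrite glue_lin gq_lin.
have -> : gq i m = if i == j then m else 0 by rewrite -{1}hm (gradingK (gq_grading M)) hm.
rewrite (glue_homog hm); case: (eqVneq i j) => [->|i_neq_j].
  by rewrite (glue_homog hm) chi_homog.
by rewrite (lin0 glue_lin) (grading_homog_eq0 (gq_grading N) (chi_homog hm)).
Qed.

Definition glue_ghom : ghom M N.
Proof.
by refine (@GHom k C M N glue _); split; [apply: glue_lin | apply: glue_act | apply: glue_gq].
Defined.

Lemma glue_ghomE m : glue_ghom m = glue m. Proof. by []. Qed.
End Glue.

Lemma glueK (k : fieldType) (C : gradedAlg k) (M N : gmod C)
    (chi : int -> gcar M -> gcar N) (chi' : int -> gcar N -> gcar M) :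
  (forall i, lin (chi i)) -> (forall i, lin (chi' i)) ->
  (forall i m, gq i m = m -> gq i (chi i m) = chi i m) ->
  (forall i m, gq i m = m -> chi' i (chi i m) = m) ->
  forall m, glue chi' (glue chi m) = m.
Proof.
move=> chi_lin chi'_lin chi_homog chiK.
apply: (eq_lin_homog (gq_grading M)) => [c u v|//|i m hm].
  by rewrite (glue_lin chi_lin) (glue_lin chi'_lin).
by rewrite (glue_homog chi_lin hm) (glue_homog chi'_lin (chi_homog _ _ hm)) chiK.
Qed.

Section TwistEquivalence.
Variables (k : fieldType) (A B : gradedAlg k).
Hypotheses (A_conn : connected_graded A) (B_conn : connected_graded B).
Variables (phi : int -> int -> galg A -> galg B) (psi : int -> int -> galg B -> galg A).
Hypotheses (phi_morph : zbar_morph phi) (psi_morph : zbar_morph psi).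
Hypotheses (psi_phi : forall (i j : int) a, homog (j - i) a -> psi i j (phi i j a) = a)
  (phi_psi : forall (i j : int) b, homog (j - i) b -> phi i j (psi i j b) = b).

Lemma twist_twist_act (M : gmod A) (m : gcar M) a :
  twist_act phi (M := twist_gmod B_conn psi_morph M) m a = gact m a.
Proof.
move: m; apply: (eq_lin_homog (gq_grading M)) => [c u v|c u v|i m hm].
- exact: (twist_act_linl phi (M := twist_gmod B_conn psi_morph M)).
- exact: (gact_linl a).
move: a; apply: (eq_lin_homog (gdeg_grading A)) => [c u v|c u v|d a ha].
- exact: (twist_act_linr phi_morph (M := twist_gmod B_conn psi_morph M)).
- exact: (gact_linr m).
rewrite (twist_act_homog phi_morph (M := twist_gmod B_conn psi_morph M) hm ha) /=.
rewrite (twist_act_homog psi_morph hm (zbar_morph_homogD phi_morph i ha)) psi_phi //.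
by rewrite [X in X - _]addrC addrK.
Qed.

Let F := twist B_conn psi_morph.
Let G := twist A_conn phi_morph.

Definition twistK_ghom (M : gmod A) : ghom M (fobj G (fobj F M)).
Proof.
refine (@GHom k A M (fobj G (fobj F M)) (fun x => x) _).
by split=> //= m a; rewrite twist_twist_act.
Defined.

Definition twistK_ghom_inv (M : gmod A) : ghom (fobj G (fobj F M)) M.
Proof.
refine (@GHom k A (fobj G (fobj F M)) M (fun x => x) _).
by split=> //= m a; rewrite twist_twist_act.
Defined.

Lemma twist_unit_iso : unit_iso F G.
Proof. by exists twistK_ghom, twistK_ghom_inv. Qed.

Lemma twist_shift_giso n : giso (fobj F (shift A n)) (shift B n).
Proof.
have addKr' (i d : int) : i + d - i = d by rewrite [X in X - _]addrC addrK.
have phi_act (i d : int) (a : galg A) (b : galg B) : homog (i - n) a -> homog d b ->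
    phi n (i + d) (twist_act psi (M := shift A n) a b) = phi n i a * b.
  move=> ha hb; rewrite (twist_act_homog psi_morph (M := shift A n) ha hb) /=.
  rewrite (zbar_morphM phi_morph (j := i)) ?phi_psi ?addKr' //.
  exact: zbar_morph_homogD.
have psi_act (i d : int) (b c : galg B) : homog (i - n) b -> homog d c ->
    psi n (i + d) (b * c) = twist_act psi (M := shift A n) (psi n i b) c.
  move=> hb hc; have hpsib := zbar_morph_homog psi_morph hb.
  rewrite (twist_act_homog psi_morph (M := shift A n) hpsib hc) /=.
  by rewrite (zbar_morphM psi_morph (j := i)) ?addKr'.
have phi_lin := zbar_morph_lin phi_morph n.
have psi_lin := zbar_morph_lin psi_morph n.
have phi_homog (i : int) (a : galg A) : homog (i - n) a -> homog (i - n) (phi n i a).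
  exact: zbar_morph_homog.
have psi_homog (i : int) (b : galg B) : homog (i - n) b -> homog (i - n) (psi n i b).
  exact: zbar_morph_homog.
exists (glue_ghom (M := fobj F (shift A n)) (N := shift B n) phi_lin phi_homog phi_act).
exists (glue_ghom (M := shift B n) (N := fobj F (shift A n)) psi_lin psi_homog psi_act).
split=> x; rewrite !glue_ghomE.
- exact: (@glueK _ _ (fobj F (shift A n)) (shift B n) _ _ phi_lin psi_lin phi_homog
           (fun i => psi_phi (i := n) (j := i))).
- exact: (@glueK _ _ (shift B n) (fobj F (shift A n)) _ _ psi_lin phi_lin psi_homog
           (fun i => phi_psi (i := n) (j := i))).
Qed.
End TwistEquivalence.

Section ZbarInverse.
Variables (k : fieldType) (A B : gradedAlg k) (phi : int -> int -> galg A -> galg B).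
Hypotheses (A_conn : connected_graded A) (B_conn : connected_graded B).
Hypothesis phi_morph : zbar_morph phi.
Hypotheses (phi_inj : forall (i j : int) a a', homog (j - i) a -> homog (j - i) a' ->
                        phi i j a = phi i j a' -> a = a')
  (phi_surj : forall (i j : int) b, homog (j - i) b -> exists2 a, homog (j - i) a & phi i j a = b).

Lemma zbar_inv_ex (i j : int) b : exists a, homog (j - i) a /\ phi i j a = gdeg (j - i) b.
Proof. by have [a ha e] := phi_surj (gdeg_idem (j - i) b); exists a. Qed.

Definition zbar_inv (i j : int) b : galg A :=
  proj1_sig (constructive_indefinite_description _ (zbar_inv_ex i j b)).

Lemma zbar_inv_homog (i j : int) b : homog (j - i) (zbar_inv i j b).
Proof. by rewrite /zbar_inv; case: constructive_indefinite_description => a []. Qed.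

Lemma zbar_invE (i j : int) b : phi i j (zbar_inv i j b) = gdeg (j - i) b.
Proof. by rewrite /zbar_inv; case: constructive_indefinite_description => a []. Qed.

Lemma zbar_invK (i j : int) b : homog (j - i) b -> phi i j (zbar_inv i j b) = b.
Proof. by rewrite zbar_invE. Qed.

Lemma zbar_inv_phi (i j : int) a : homog (j - i) a -> zbar_inv i j (phi i j a) = a.
Proof.
move=> ha; apply: (phi_inj (zbar_inv_homog _ _ _) ha).
by rewrite zbar_invE (zbar_morph_homog phi_morph ha).
Qed.

Lemma zbar_inv_lin (i j : int) : lin (zbar_inv i j).
Proof.
move=> c u v; apply: phi_inj (zbar_inv_homog _ _ _) _ _.
- by rewrite /homog gdeg_lin !zbar_inv_homog.
- by rewrite zbar_invE zbar_morph_lin // !zbar_invE gdeg_lin.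
Qed.

Lemma zbar_invM (i j l : int) b b' : homog (j - i) b -> homog (l - j) b' ->
  zbar_inv i l (b * b') = zbar_inv i j b * zbar_inv j l b'.
Proof.
move=> hb hb'; have lji : l - i = (j - i) + (l - j) by ring.
apply: phi_inj (zbar_inv_homog _ _ _) _ _.
- by rewrite lji; apply: gdeg_mul; apply: zbar_inv_homog.
rewrite zbar_invE (zbar_morphM phi_morph (zbar_inv_homog i j b) (zbar_inv_homog j l b')).
rewrite (zbar_invK hb) (zbar_invK hb').
by rewrite lji; apply: gdeg_mul.
Qed.

Lemma zbar_inv1 (i : int) : zbar_inv i i 1 = 1.
Proof.
apply: (phi_inj (zbar_inv_homog _ _ _)).
  by rewrite subrr; apply: homog1.
by rewrite zbar_invE zbar_morph1 // subrr homog1.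
Qed.

Lemma zbar_inv_morph : zbar_morph zbar_inv.
Proof.
split=> [|i j b _||]; [exact: zbar_inv_lin|exact: zbar_inv_homog|exact: zbar_invM|exact: zbar_inv1].
Qed.
End ZbarInverse.

Lemma shift_equiv_of_zbar_iso (k : fieldType) (A B : gradedAlg k) :
  connected_graded A -> connected_graded B -> zbar_iso A B ->
  exists F : gfunctor A B,
    is_equivalence F /\ forall n, giso (fobj F (shift A n)) (shift B n).
Proof.
move=> A_conn B_conn [phi [phi_lin phi_homog phi_inj phi_surj [phiM phi1]]].
have phi_morph : zbar_morph phi by split.
have psi_morph := zbar_inv_morph A_conn B_conn phi_morph phi_inj phi_surj.
have psi_phi := zbar_inv_phi phi_morph phi_inj phi_surj.
have phi_psi := zbar_invK phi_surj.
exists (twist B_conn psi_morph); split; last exact: twist_shift_giso.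
split; first exact: twist_klin.
exists (twist A_conn phi_morph); split; first exact: twist_klin.
- exact: twist_unit_iso.
- exact: twist_unit_iso.
Qed.

Theorem proposition3p4 (k : fieldType) (A B : gradedAlg k)
  (hA : connected_graded A) (hB : connected_graded B)
  (hA1 : exists a : galg A, @gdeg k A 1 a != 0) :
  (gr_equiv A B <-> zbar_iso A B) /\
  (zbar_iso A B <->
     exists F : gfunctor A B,
       is_equivalence F /\ forall n : int, giso (fobj F (shift A n)) (shift B n)).
Proof.
have shift_equiv := shift_equiv_of_zbar_iso hA hB.
split; split.
- exact: zbar_iso_of_gr_equiv.
- by case/shift_equiv => F [F_equiv _]; exists F.
- exact: shift_equiv.
- case=> F [[F_klin [G [G_klin FG_unit GF_unit]]] F_shift].
  apply: (zbar_iso_of_shift_giso (c := 0)) hA hB F_klin G_klin FG_unit GF_unit _ => n.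
  by rewrite addr0.
Qed.
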